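(* Let $n\ge 2k\ge 2$, let $S\subseteq\{0,1,\ldots,k-1\}$ be nonempty, and let $X=\bigcup_{i\in S}J(n,k,i)$. If $X$ admits perfect state transfer between two distinct vertices, then $n=2k$.
   Context: $J(n,k,i)$ is the graph on the $k$-subsets of $\{1,\ldots,n\}$ with $A\sim B$ iff $|A\cap B|=i$; the union $\bigcup_{i\in S}J(n,k,i)$ is the graph on the same vertex set with $A\sim B$ iff $|A\cap B|\in S$. For a simple graph $X$ with adjacency matrix $A$, let $\mathcal{H}_X(t)=e^{itA}$; there is perfect state transfer between vertices $u\ne v$ if $|\mathcal{H}_X(\tau)_{u,v}|=1$ for some $\tau>0$. *)

From Stdlib Require Import Reals Factorial.
From mathcomp Require Import all_boot.
Set Implicit Arguments. Unset Strict Implicit. Unset Printing Implicit Defensive.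

Definition vtx (n k : nat) : {set {set 'I_n}} := [set A : {set 'I_n} | #|A| == k].

Definition jadj (n k : nat) (S : {set 'I_k}) (A B : {set 'I_n}) : bool :=
  [&& A \in vtx n k, B \in vtx n k & [exists i in S, #|A :&: B| == nat_of_ord i]].

(* (A^m)_{u,v} for the adjacency matrix A of the graph: number of walks. *)
Fixpoint walks (n k : nat) (S : {set 'I_k}) (m : nat) (u v : {set 'I_n}) : nat :=
  match m with
  | 0 => nat_of_bool (u == v)
  | m'.+1 => \sum_(w in vtx n k) (jadj S u w * walks S m' w v)
  end.

(* e^{itA} = sum_m (it)^m A^m / m!; since A is real, its (u,v) entry has
   real part  sum_j (-1)^j t^(2j)   (A^(2j))_{uv}   / (2j)!
   imag part  sum_j (-1)^j t^(2j+1) (A^(2j+1))_{uv} / (2j+1)!  *)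
Definition expRe_term n k (S : {set 'I_k}) (t : R) (u v : {set 'I_n}) (j : nat) : R :=
  Rdiv (Rmult (Rmult (pow (-1) j) (pow t (2 * j))) (INR (walks S (2 * j) u v)))
       (INR (Factorial.fact (2 * j))).

Definition expIm_term n k (S : {set 'I_k}) (t : R) (u v : {set 'I_n}) (j : nat) : R :=
  Rdiv (Rmult (Rmult (pow (-1) j) (pow t (2 * j + 1))) (INR (walks S (2 * j + 1) u v)))
       (INR (Factorial.fact (2 * j + 1))).

Definition pst n k (S : {set 'I_k}) (u v : {set 'I_n}) : Prop :=
  exists tau : R, Rlt R0 tau /\
    exists re im : R,
      infinite_sum (expRe_term S tau u v) re /\
      infinite_sum (expIm_term S tau u v) im /\
      Rplus (Rmult re re) (Rmult im im) = R1.

From Stdlib Require Import Reals Factorial Lra.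
From Coquelicot Require Import Coquelicot.
From mathcomp Require Import all_boot perm zify Rstruct.
Set Implicit Arguments. Unset Strict Implicit. Unset Printing Implicit Defensive.

(* If n > 2k, take a in v \ u and b outside u and v: the transposition (a b)
   of the ground set is an automorphism of X that fixes u and moves v to some
   v' <> v, so it preserves walk counts and H(t)_{u,v} = H(t)_{u,v'}.  As
   H(t) is unitary, sum_w |H(t)_{u,w}|^2 = 1, hence |H(t)_{u,v}|^2 <= 1/2.
   Unitarity is read off the power series: by sum_w (A^p)_{uw} (A^q)_{wu} =
   (A^(p+q))_{uu}, the Cauchy squares of the real and imaginary parts of row u
   reduce to the binomial sums sum_j C(2m,2j) and sum_j C(2m,2j+1), which agree
   because (1 - 1)^(2m) = 0. *)

Local Open Scope nat_scope.

Section Walks.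
Variables (n k : nat) (S : {set 'I_k}).

Lemma jadjC (A B : {set 'I_n}) : jadj S A B = jadj S B A.
Proof. by rewrite /jadj setIC andbCA. Qed.

Lemma walksD p q (x y : {set 'I_n}) : x \in vtx n k ->
  walks S (p + q) x y = \sum_(w in vtx n k) walks S p x w * walks S q w y.
Proof.
elim: p x => [|p IHp] x x_vtx.
  rewrite (bigD1 x) //= eqxx mul1n big1 ?addn0 // => w /andP[_ /negbTE].
  by rewrite eq_sym => ->.
rewrite addSn /= (eq_bigr (fun z => \sum_(w in vtx n k)
   jadj S x z * (walks S p z w * walks S q w y))); last first.
  by move=> z z_vtx; rewrite IHp // big_distrr.
rewrite exchange_big; apply: eq_bigr => w _.
by rewrite big_distrl; apply: eq_bigr => z _; rewrite mulnA.
Qed.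

Lemma walks1 (x y : {set 'I_n}) : y \in vtx n k -> walks S 1 x y = jadj S x y.
Proof.
move=> y_vtx /=; rewrite (bigD1 y) //= eqxx muln1 big1 ?addn0 // => z /andP[_ /negbTE].
by rewrite eq_sym => ->; rewrite muln0.
Qed.

Lemma walksC m (x y : {set 'I_n}) : x \in vtx n k -> y \in vtx n k ->
  walks S m x y = walks S m y x.
Proof.
elim: m x y => [|m IHm] x y x_vtx y_vtx; first by rewrite /= eq_sym.
rewrite -[m.+1 in LHS]addn1 -[m.+1]/(1 + m)%N !walksD //.
by apply: eq_bigr => w w_vtx; rewrite !walks1 // IHm // jadjC mulnC.
Qed.

Lemma walks_leq m (x y : {set 'I_n}) : walks S m x y <= #|vtx n k| ^ m.
Proof.
elim: m x => [|m IHm] x /=; first by case: (x == y).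
rewrite expnS -{1}sum1_card big_distrl /=.
by apply: leq_sum => z _; apply: leq_mul; [case: jadj | exact: IHm].
Qed.

Section Relabel.
Variable f : 'I_n -> 'I_n.
Hypothesis f_inj : injective f.

Lemma imset_vtx (A : {set 'I_n}) : (f @: A \in vtx n k) = (A \in vtx n k).
Proof. by rewrite !inE card_imset. Qed.

Lemma jadj_imset (A B : {set 'I_n}) : jadj S (f @: A) (f @: B) = jadj S A B.
Proof. by rewrite /jadj !imset_vtx -imsetI ?card_imset // => x y _ _; apply: f_inj. Qed.

Lemma walks_imset m (x y : {set 'I_n}) : walks S m (f @: x) (f @: y) = walks S m x y.
Proof.
have imset_inj : injective (fun A : {set 'I_n} => f @: A) by apply: imset_inj.
elim: m x => [|m IHm] x /=; first by rewrite (inj_eq imset_inj).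
rewrite (reindex_inj imset_inj) /=.
by apply: eq_big => [w|w _]; rewrite ?imset_vtx // jadj_imset IHm.
Qed.

End Relabel.
End Walks.

Lemma tperm_fix_move (T : finType) (u v : {set T}) :
  #|u| = #|v| -> u != v -> #|u| + #|v| < #|T| ->
  exists s : {perm T}, s @: u = u /\ s @: v != v.
Proof.
move=> card_uv neq_uv small_uv.
have [a] : exists a, a \in v :\: u.
  apply/set0Pn; apply: contraNneq neq_uv => /eqP; rewrite setD_eq0 => sub_vu.
  by rewrite eq_sym eqEcard sub_vu card_uv /=.
have [b] : exists b, b \in ~: (u :|: v).
  apply/set0Pn; rewrite -card_gt0 cardsCs setCK.
  by have := cardsUI u v; lia.
rewrite !inE negb_or => /andP[b_u b_v] /andP[a_u a_v].
exists (tperm a b); split.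
  rewrite -[RHS]imset_id; apply: eq_in_imset => x x_u.
  by rewrite tpermD //; [move: a_u | move: b_u]; apply: contraNneq => ->.
apply: contraNneq b_v => <-; apply/imsetP; exists a => //; by rewrite tpermL.
Qed.

Local Open Scope R_scope.

Lemma is_series_0 : is_series (fun _ : nat => 0) 0.
Proof.
apply/is_series_Reals => e e_gt0; exists 0%N => m _.
by rewrite /R_dist sum_cte Rmult_0_l Rminus_0_r Rabs_R0.
Qed.

Lemma is_series_big (I : Type) (r : seq I) (P : pred I) (F : I -> nat -> R) (L : I -> R) :
  (forall i, P i -> is_series (F i) (L i)) ->
  is_series (fun j => \big[Rplus/0]_(i <- r | P i) F i j) (\big[Rplus/0]_(i <- r | P i) L i).
Proof.
move=> FL; elim: r => [|i r IHr].
  by rewrite big_nil; apply: (is_series_ext _ _ _ _ is_series_0) => j; rewrite big_nil.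
rewrite big_cons; case: ifP => Pi.
  apply: (is_series_ext _ _ _ _ (is_series_plus _ _ _ _ (FL i Pi) IHr)) => j.
  by rewrite big_cons Pi.
by apply: (is_series_ext _ _ _ _ IHr) => j; rewrite big_cons Pi.
Qed.

Lemma big_sum_f_R0 (I : Type) (r : seq I) (P : pred I) (F : I -> nat -> R) m :
  \big[Rplus/0]_(i <- r | P i) sum_f_R0 (F i) m =
  sum_f_R0 (fun j => \big[Rplus/0]_(i <- r | P i) F i j) m.
Proof. by elim: m => [|m IHm] //=; rewrite big_split IHm. Qed.

Lemma is_series_shift_cancel (a b : nat -> R) (A B : R) :
  is_series a A -> is_series b B -> (forall m, a m.+1 + b m = 0) -> A + B = a 0%N.
Proof.
move=> aA bB ab0.
have a1A : is_series (fun m => a m.+1) (A - a 0%N).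
  by apply: is_series_incr_1; rewrite /plus /=; replace (A - a 0%N + a 0%N) with A by ring.
have : is_series (fun m => a m.+1 + b m) (A - a 0%N + B) by exact: is_series_plus a1A bB.
move/(is_series_ext _ _ _ ab0)/is_series_unique; rewrite (is_series_unique _ _ is_series_0).
lra.
Qed.

Lemma Rle_big_pair (T : finType) (A : {set T}) (F : T -> R) (x y : T) :
  x \in A -> y \in A -> x != y -> (forall z, 0 <= F z) ->
  F x + F y <= \big[Rplus/0]_(z in A) F z.
Proof.
move=> xA yA xy F_ge0; rewrite (bigD1 x) // (bigD1 y) /=; last by rewrite yA eq_sym.
have : 0 <= \big[Rplus/0]_(z | (z \in A) && (z != x) && (z != y)) F z.
  by apply: big_ind => //; [lra | move=> ? ? ? ?; lra].
lra.
Qed.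

Lemma sum_f_R0_parity (f : nat -> R) m :
  sum_f_R0 f (2 * m.+1) =
  sum_f_R0 (fun j => f (2 * j)%N) m.+1 + sum_f_R0 (fun j => f (2 * j + 1)%N) m.
Proof.
elim: m => [|m IHm]; first by rewrite /= !muln0 !muln1 add0n /=; ring.
have -> : (2 * m.+2 = (2 * m.+1).+2)%N by lia.
rewrite (tech5 f (2 * m.+1).+1) (tech5 f (2 * m.+1)) IHm /= addn1.
have -> : (2 * m.+2 = (2 * m.+1).+2)%N by lia.
ring.
Qed.

Lemma sum_binomial_even_odd m :
  sum_f_R0 (fun j => Binomial.C (2 * m.+1) (2 * j)) m.+1 =
  sum_f_R0 (fun j => Binomial.C (2 * m.+1) (2 * j + 1)) m.
Proof.
have : sum_f_R0 (fun j => Binomial.C (2 * m.+1) (2 * j)) m.+1 +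
       sum_f_R0 (fun j => Binomial.C (2 * m.+1) (2 * j + 1) * -1) m = 0.
  rewrite -(pow_i (2 * m.+1)); last by apply/ltP; lia.
  rewrite -(Rplus_opp_l 1) Binomial.binomial sum_f_R0_parity.
  congr (_ + _); apply: PartSum.sum_eq => j _; last rewrite pow_add.
    by rewrite pow_1_even pow1; ring.
  by rewrite pow_1_even pow1; ring.
rewrite -scal_sum; lra.
Qed.

Lemma INR_expn a m : INR (a ^ m) = INR a ^ m.
Proof. by elim: m => [|m IHm] //; rewrite expnS mult_INR IHm. Qed.

Lemma ex_series_exp_terms (x : R) : ex_series (fun j => x ^ j / INR (fact j)).
Proof.
exists (exp x); apply: is_series_ext (is_exp_Reals x) => j.
by rewrite /scal /= /mult /= pow_n_pow /Rdiv Rmult_comm.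
Qed.

Definition cauchy_prod (a b : nat -> R) m := sum_f_R0 (fun j => a j * b (m - j)%coq_nat) m.

Section Propagator.
Variables (n k : nat) (S : {set 'I_k}) (t : R) (u : {set 'I_n}).
Hypothesis u_vtx : u \in vtx n k.

Definition walk_term m w := t ^ m * INR (walks S m u w) / INR (fact m).

Lemma expRe_termE w j : expRe_term S t u w j = (-1) ^ j * walk_term (2 * j) w.
Proof. by rewrite /expRe_term /walk_term /Rdiv; ring. Qed.

Lemma expIm_termE w j : expIm_term S t u w j = (-1) ^ j * walk_term (2 * j + 1) w.
Proof. by rewrite /expIm_term /walk_term /Rdiv; ring. Qed.

Lemma Rabs_walk_term_le m w :
  Rabs (walk_term m w) <= (Rabs t * INR #|vtx n k|) ^ m / INR (fact m).
Proof.
have fact_gt0 := INR_fact_lt_0 m.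
rewrite /walk_term /Rdiv !Rabs_mult Rabs_inv -RPow_abs !(Rabs_pos_eq _ (pos_INR _)).
rewrite Rpow_mult_distr; apply: Rmult_le_compat_r; first by left; apply: Rinv_0_lt_compat.
apply: Rmult_le_compat_l; first by apply: pow_le; apply: Rabs_pos.
by rewrite -INR_expn; apply/le_INR/leP/walks_leq.
Qed.

Lemma ex_series_Rabs_walk_terms e w :
  ex_series (fun j => Rabs ((-1) ^ j * walk_term (2 * j + e) w)).
Proof.
set x := Rabs t * INR #|vtx n k|.
have x_ge0 : 0 <= x by apply: Rmult_le_pos; [apply: Rabs_pos | apply: pos_INR].
apply: (ex_series_le _ (fun j => x ^ e * ((x ^ 2) ^ j / INR (fact j)))).
  move=> j; rewrite /norm /= /abs /= Rabs_Rabsolu Rabs_mult pow_1_abs Rmult_1_l.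
  apply: Rle_trans (Rabs_walk_term_le _ _) _.
  have -> : x ^ e * ((x ^ 2) ^ j / INR (fact j)) = x ^ (2 * j + e) * / INR (fact j).
    by rewrite pow_add pow_mult /Rdiv; ring.
  apply: Rmult_le_compat_l; first exact: pow_le.
  apply: Rinv_le_contravar; first exact: INR_fact_lt_0.
  by apply/le_INR/fact_le/leP; lia.
exact: ex_series_scal_l (ex_series_exp_terms _).
Qed.

Lemma sum_walk_term_mul p q :
  \big[Rplus/0]_(w in vtx n k) (walk_term p w * walk_term q w) =
  Binomial.C (p + q) p * walk_term (p + q) u.
Proof.
have fact_neq0 := INR_fact_neq_0.
rewrite (eq_bigr (fun w => t ^ (p + q) / (INR (fact p) * INR (fact q)) *
                           INR (walks S p u w * walks S q u w))); last first.
  by move=> w _; rewrite mult_INR /walk_term pow_add; field.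
rewrite -big_distrr /= -(big_morph _ plus_INR (erefl (INR 0))).
rewrite (eq_bigr (fun w => walks S p u w * walks S q w u)%N); last first.
  by move=> w w_vtx; rewrite (walksC S q u_vtx w_vtx).
rewrite -walksD // /Binomial.C /walk_term.
have -> : (p + q - p)%coq_nat = q by lia.
by field.
Qed.

Lemma sum_cauchy_walk_terms e (a : {set 'I_n} -> nat -> R) m :
  (forall w j, a w j = (-1) ^ j * walk_term (2 * j + e) w) ->
  \big[Rplus/0]_(w in vtx n k) cauchy_prod (a w) (a w) m =
  (-1) ^ m * walk_term (2 * m + 2 * e) u *
  sum_f_R0 (fun j => Binomial.C (2 * m + 2 * e) (2 * j + e)) m.
Proof.
move=> aE; rewrite /cauchy_prod big_sum_f_R0 scal_sum.
apply: PartSum.sum_eq => j /leP j_le.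
rewrite (eq_bigr (fun w => (-1) ^ m *
    (walk_term (2 * j + e) w * walk_term (2 * (m - j) + e) w))); last first.
  move=> w _; have sign : (-1) ^ j * (-1) ^ (m - j) = (-1) ^ m.
    by rewrite -pow_add; congr (_ ^ _); lia.
  by rewrite !aE -[(m - j)%coq_nat]/(m - j)%N -sign; ring.
rewrite -big_distrr /= sum_walk_term_mul.
have -> : (2 * j + e + (2 * (m - j) + e) = 2 * m + 2 * e)%N by lia.
ring.
Qed.

Lemma sum_cauchy_expRe m :
  \big[Rplus/0]_(w in vtx n k) cauchy_prod (expRe_term S t u w) (expRe_term S t u w) m =
  (-1) ^ m * walk_term (2 * m) u * sum_f_R0 (fun j => Binomial.C (2 * m) (2 * j)) m.
Proof.
rewrite (@sum_cauchy_walk_terms 0) => [|w j]; last by rewrite expRe_termE addn0.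
rewrite muln0 addn0; congr (_ * _); apply: PartSum.sum_eq => j _; by rewrite addn0.
Qed.

Lemma sum_cauchy_expIm m :
  \big[Rplus/0]_(w in vtx n k) cauchy_prod (expIm_term S t u w) (expIm_term S t u w) m =
  (-1) ^ m * walk_term (2 * m.+1) u * sum_f_R0 (fun j => Binomial.C (2 * m.+1) (2 * j + 1)) m.
Proof.
rewrite (@sum_cauchy_walk_terms 1) => [|w j]; last exact: expIm_termE.
by have -> : (2 * m + 2 * 1 = 2 * m.+1)%N by lia.
Qed.

Lemma sum_cauchy_exp0 :
  \big[Rplus/0]_(w in vtx n k) cauchy_prod (expRe_term S t u w) (expRe_term S t u w) 0 = 1.
Proof. by rewrite sum_cauchy_expRe /walk_term /= eqxx /= muln0 C_n_n /Rdiv Rinv_1; ring. Qed.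

Lemma sum_cauchy_expS m :
  \big[Rplus/0]_(w in vtx n k) cauchy_prod (expRe_term S t u w) (expRe_term S t u w) m.+1 +
  \big[Rplus/0]_(w in vtx n k) cauchy_prod (expIm_term S t u w) (expIm_term S t u w) m = 0.
Proof. by rewrite sum_cauchy_expRe sum_cauchy_expIm sum_binomial_even_odd /=; ring. Qed.

Definition transfer_prob w :=
  Series (expRe_term S t u w) * Series (expRe_term S t u w) +
  Series (expIm_term S t u w) * Series (expIm_term S t u w).

Lemma sum_transfer_prob : \big[Rplus/0]_(w in vtx n k) transfer_prob w = 1.
Proof.
have Re_abs w : ex_series (fun j => Rabs (expRe_term S t u w j)).
  apply: ex_series_ext (ex_series_Rabs_walk_terms 0 w) => j.
  by rewrite expRe_termE addn0.
have Im_abs w : ex_series (fun j => Rabs (expIm_term S t u w j)).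
  by apply: ex_series_ext (ex_series_Rabs_walk_terms 1 w) => j; rewrite expIm_termE.
have Re_sqr := is_series_big (r := index_enum _) (P := mem (vtx n k)) (fun w _ =>
  is_series_mult _ _ _ _ (Series_correct _ (ex_series_Rabs _ (Re_abs w)))
    (Series_correct _ (ex_series_Rabs _ (Re_abs w))) (Re_abs w) (Re_abs w)).
have Im_sqr := is_series_big (r := index_enum _) (P := mem (vtx n k)) (fun w _ =>
  is_series_mult _ _ _ _ (Series_correct _ (ex_series_Rabs _ (Im_abs w)))
    (Series_correct _ (ex_series_Rabs _ (Im_abs w))) (Im_abs w) (Im_abs w)).
rewrite /transfer_prob big_split /= -sum_cauchy_exp0.
exact: is_series_shift_cancel Re_sqr Im_sqr sum_cauchy_expS.
Qed.
End Propagator.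

Lemma no_pst_to_moved_vertex n k (S : {set 'I_k}) (f : 'I_n -> 'I_n) (u v : {set 'I_n}) :
  injective f -> u \in vtx n k -> v \in vtx n k -> f @: u = u -> f @: v != v ->
  ~ pst S u v.
Proof.
move=> f_inj u_vtx v_vtx fu fv [tau [_ [re [im [re_sum [im_sum unit_entry]]]]]].
have walks_moved m : walks S m u (f @: v) = walks S m u v by rewrite -{1}fu walks_imset.
have Re_v : Series (expRe_term S tau u v) = re by apply/is_series_unique/is_series_Reals.
have Im_v : Series (expIm_term S tau u v) = im by apply/is_series_unique/is_series_Reals.
have Re_fv : Series (expRe_term S tau u (f @: v)) = re.
  by rewrite -Re_v; apply: Series_ext => j; rewrite /expRe_term walks_moved.
have Im_fv : Series (expIm_term S tau u (f @: v)) = im.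
  by rewrite -Im_v; apply: Series_ext => j; rewrite /expIm_term walks_moved.
have v_fv : v != f @: v by rewrite eq_sym.
have fv_vtx : f @: v \in vtx n k by rewrite imset_vtx.
have prob_ge0 w : 0 <= transfer_prob S tau u w by rewrite /transfer_prob; nra.
have := Rle_big_pair v_vtx fv_vtx v_fv prob_ge0.
rewrite sum_transfer_prob // /transfer_prob Re_v Im_v Re_fv Im_fv unit_entry.
lra.
Qed.

Theorem mainTheorem17 (n k : nat) (S : {set 'I_k}) :
  (1 <= k)%N -> (2 * k <= n)%N -> S != set0 ->
  (exists u v : {set 'I_n},
      [/\ u \in vtx n k, v \in vtx n k, u != v & pst S u v]) ->
  n = (2 * k)%N.
Proof.
move=> _ le_2k_n _ [u [v [u_vtx v_vtx neq_uv pst_uv]]].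
move: le_2k_n; rewrite leq_eqVlt => /orP[/eqP -> // | lt_2k_n]; exfalso.
have [s [su sv]] : exists s : {perm 'I_n}, s @: u = u /\ s @: v != v.
  move: u_vtx v_vtx; rewrite !inE => /eqP card_u /eqP card_v.
  by apply: tperm_fix_move; rewrite ?card_u ?card_v ?card_ord //; lia.
exact: no_pst_to_moved_vertex (@perm_inj _ s) u_vtx v_vtx su sv pst_uv.
Qed.
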